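(* Let $V=\{1,\dots,n\}$, let $H_1=(V,E_1)$ with $E_1=\{e\subseteq V : |e|\ge 2\}$, and let $H_2=(V,E_2)$ with $E_2=\{e\subseteq V : 2\le|e|\le 3\}$. If the toric ideal $I_{H_2}$ is generated in degree at most $d$, then the toric ideal $I_{H_1}$ is generated in degree at most $d$.
   Context: For a hypergraph $H=(V,E)$ (edges are nonempty subsets of $V=\{1,\dots,n\}$, no repeated edges) and a field $K$, the toric ideal $I_H$ is the kernel of the $K$-algebra homomorphism $K[t_e : e\in E]\to K[x_1,\dots,x_n]$, $t_e\mapsto\prod_{j\in e}x_j$. An ideal is generated in degree at most $d$ if it has a generating set consisting of polynomials of degree at most $d$. *)

From HB Require Import structures.
From mathcomp Require Import all_boot all_order all_algebra.
From mathcomp Require Import mpoly.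
Set Implicit Arguments. Unset Strict Implicit. Unset Printing Implicit Defensive.
Import GRing.Theory.
Local Open Scope ring_scope.

(* A hypergraph on V = 'I_n (i.e. {1,...,n} shifted to {0,...,n-1}) is given
   by its edge set E : {set {set 'I_n}} (a set, so no repeated edges; the
   edges of interest below are all nonempty).  The variables t_e of the
   polynomial ring K[t_e : e in E] are indexed by 'I_#|E| via enum_val. *)

Definition edge_monomial (K : fieldType) (n : nat) (e : {set 'I_n}) : {mpoly K[n]} :=
  \prod_(j in e) 'X_j.

Definition toric_map (K : fieldType) (n : nat) (E : {set {set 'I_n}})
  (p : {mpoly K[#|E|]}) : {mpoly K[n]} :=
  mmap (fun c : K => c%:MP) (fun i : 'I_#|E| => edge_monomial K (enum_val i)) p.

Definition toric_ideal (K : fieldType) (n : nat) (E : {set {set 'I_n}})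
  : pred {mpoly K[#|E|]} :=
  fun p => toric_map p == 0.

(* An ideal I (given as a predicate) is generated in degree at most d if it
   has a generating set S of polynomials of (total) degree at most d:
   S is contained in I, each element of S has degree <= d (msize = 1 + degree,
   msize 0 = 0), and every element of I is a finite polynomial combination
   of elements of S. *)
Definition generated_in_degree_le (K : fieldType) (m : nat)
  (I : pred {mpoly K[m]}) (d : nat) : Prop :=
  exists S : pred {mpoly K[m]},
    (forall g, S g -> I g /\ (msize g <= d.+1)%N) /\
    (forall f, I f -> exists (r : nat) (c g : 'I_r -> {mpoly K[m]}),
        (forall i, S (g i)) /\ f = \sum_(i < r) c i * g i).

Definition E1 (n : nat) : {set {set 'I_n}} := [set e : {set 'I_n} | (2 <= #|e|)%N].
Definition E2 (n : nat) : {set {set 'I_n}} := [set e : {set 'I_n} | (2 <= #|e| <= 3)%N].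

From HB Require Import structures.
From mathcomp Require Import all_boot all_order all_algebra.
From mathcomp Require Import mpoly.
From mathcomp Require Import zify.
From Stdlib Require Import ClassicalEpsilon.
Set Implicit Arguments. Unset Strict Implicit. Unset Printing Implicit Defensive.
Import GRing.Theory.
Local Open Scope ring_scope.

(* If |e| >= 4, write e = a ⊔ b with |a| = 2; modulo the quadratic binomials
   t_e - t_a t_b (e = a ⊔ b) of I_{H_1}, every variable t_e is then congruent to a
   product of variables of E_2 with the same image monomial.  This yields a ring map
   proj : K[E_1] -> K[E_2] commuting with the toric maps and with f ≡ proj f modulo
   those binomials, so for d >= 2 the binomials together with any generators of
   I_{H_2} generate I_{H_1}.  For d <= 1 the hypothesis forces I_{H_2} = 0, since a
   toric ideal contains no nonzero polynomial of degree <= 1; this is impossible for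
   n >= 4 (t_{12} t_{34} - t_{13} t_{24} lies in I_{H_2}), and for n <= 3 E_1 = E_2. *)

Section IdealGeneratedBy.
Variable A : comNzRingType.
Implicit Types (S T : A -> Prop) (f g p : A).

Definition in_ideal S f :=
  exists s : seq (A * A), (forall x, x \in s -> S x.2) /\ f = \sum_(x <- s) x.1 * x.2.

Lemma in_ideal0 S : in_ideal S 0.
Proof. by exists [::]; split => //; rewrite big_nil. Qed.

Lemma in_ideal_gen S g : S g -> in_ideal S g.
Proof.
move=> Sg; exists [:: (1, g)]; split; first by move=> x; rewrite inE => /eqP ->.
by rewrite big_seq1 mul1r.
Qed.

Lemma in_idealD S f g : in_ideal S f -> in_ideal S g -> in_ideal S (f + g).
Proof.
move=> [s1 [S1 ->]] [s2 [S2 ->]]; exists (s1 ++ s2); split; last by rewrite big_cat.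
by move=> x; rewrite mem_cat => /orP [/S1|/S2].
Qed.

Lemma in_idealMl S p f : in_ideal S f -> in_ideal S (p * f).
Proof.
move=> [s [Ss ->]]; exists [seq (p * x.1, x.2) | x <- s]; split.
  by move=> _ /mapP [x xs ->] /=; apply: Ss.
by rewrite big_map mulr_sumr; apply: eq_bigr => x _; rewrite mulrA.
Qed.

Lemma in_idealMr S p f : in_ideal S f -> in_ideal S (f * p).
Proof. by rewrite mulrC; apply: in_idealMl. Qed.

Lemma sub_in_ideal S T f : (forall g, S g -> T g) -> in_ideal S f -> in_ideal T f.
Proof. by move=> ST [s [Ss ->]]; exists s; split => // x /Ss /ST. Qed.

Lemma in_ideal_eq0 S f :
  (forall g, S g -> g = 0) -> in_ideal S f -> f = 0.
Proof.
move=> S0 [s [Ss ->]]; rewrite big_seq big1 // => x /Ss /S0 ->.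
by rewrite mulr0.
Qed.

Lemma in_idealP S f :
  (exists (r : nat) (c g : 'I_r -> A),
     (forall i, S (g i)) /\ f = \sum_(i < r) c i * g i) <-> in_ideal S f.
Proof.
split=> [[r [c [g [Sg ->]]]] | [s [Ss ->]]].
  exists [seq (c i, g i) | i <- enum 'I_r]; split; last by rewrite big_map big_enum.
  by move=> _ /mapP [i _ ->]; apply: Sg.
exists (size s), (fun i => (tnth (in_tuple s) i).1), (fun i => (tnth (in_tuple s) i).2).
split; last by rewrite (big_tnth _ _ (in_tuple s)).
by move=> i; apply/Ss/mem_tnth.
Qed.

End IdealGeneratedBy.

Lemma in_ideal_rmorph (A B : comNzRingType) (phi : {rmorphism A -> B})
    (S : A -> Prop) f :
  in_ideal S f -> in_ideal (fun h : B => exists2 g, S g & h = phi g) (phi f).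
Proof.
move=> [s [Ss ->]]; exists [seq (phi x.1, phi x.2) | x <- s]; split.
  by move=> _ /mapP [x xs ->]; exists x.2 => //; apply: Ss.
by rewrite big_map rmorph_sum; apply: eq_bigr => x _; rewrite rmorphM.
Qed.

Lemma generated_in_degree_leE (K : fieldType) (m : nat) (I : pred {mpoly K[m]}) d :
  generated_in_degree_le I d <->
  exists S : {mpoly K[m]} -> Prop,
    (forall g, S g -> I g /\ (msize g <= d.+1)%N) /\ (forall f, I f -> in_ideal S f).
Proof.
split=> [[S [SI IS]] | [S [SI IS]]].
  by exists (fun g => S g); split => // f /IS If; apply/in_idealP.
pose Sb g : bool := if excluded_middle_informative (S g) then true else false.
have SbP g : Sb g <-> S g by rewrite /Sb; case: excluded_middle_informative.
exists Sb; split=> [g /SbP /SI // | f /IS If].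
by apply/(in_idealP (fun g => Sb g)); apply: sub_in_ideal If => g /SbP.
Qed.

Section MmapFacts.
Variables (a : nat) (R S : comNzRingType).

Lemma eq_mmap (f1 f2 : R -> S) (h1 h2 : 'I_a -> S) p :
  f1 =1 f2 -> h1 =1 h2 -> mmap f1 h1 p = mmap f2 h2 p.
Proof.
move=> ef eh; rewrite /mmap; apply: eq_bigr => m _.
by rewrite ef (mmap1_eq _ eh).
Qed.

Lemma mmapXU (f : {rmorphism R -> S}) (h : 'I_a -> S) i : mmap f h 'X_i = h i.
Proof. by rewrite mmapX mmap1U. Qed.

Lemma rmorph_mmap (T : comNzRingType) (phi : {rmorphism S -> T}) (f : R -> S)
    (h : 'I_a -> S) p :
  phi (mmap f h p) = mmap (phi \o f) (phi \o h) p.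
Proof.
rewrite /mmap rmorph_sum; apply: eq_bigr => m _.
rewrite rmorphM /mmap1 rmorph_prod; congr (_ * _); apply: eq_bigr => i _.
exact: rmorphXn.
Qed.

End MmapFacts.

Lemma msize_rename_le (R : comNzRingType) (a b : nat) (s : 'I_a -> 'I_b)
    (p : {mpoly R[a]}) :
  (msize (mmap (fun c : R => c%:MP) (fun j => 'X_(s j) : {mpoly R[b]}) p) <= msize p)%N.
Proof.
have rename_mnm m : mmap1 (fun j => 'X_(s j) : {mpoly R[b]}) m =
    'X_[(\sum_(j < a) U_(s j) *+ m j)%MM].
  rewrite /mmap1; under eq_bigr do rewrite mpolyXn.
  by rewrite (big_morph _ (@mpolyXD b R) (@mpolyX0 b R)).
rewrite {1}/mmap; apply: leq_trans (mmeasure_sum _ _ _ _) _.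
apply/bigmax_leqP_seq => m /msize_mdeg_lt m_lt _.
rewrite rename_mnm mul_mpolyC; apply: leq_trans (msizeZ_le _ _) _.
rewrite msizeX mdeg_sum; apply: leq_trans m_lt; rewrite ltnS mdegE.
by apply/eq_leq/eq_bigr => j _; rewrite mdegMn mdeg1 mul1n.
Qed.

Lemma in_ideal_diff_mmap (R : comNzRingType) (a : nat) (S : {mpoly R[a]} -> Prop)
    (h : 'I_a -> {mpoly R[a]}) :
  (forall i, in_ideal S ('X_i - h i)) ->
  forall f, in_ideal S (f - mmap (fun c : R => c%:MP) h f).
Proof.
move=> Xh; pose phi := mmap (fun c : R => c%:MP) h.
pose P f := in_ideal S (f - phi f).
have PD f g : P f -> P g -> P (f + g).
  rewrite /P /phi rmorphD -/phi opprD addrACA; exact: in_idealD.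
have PM f g : P f -> P g -> P (f * g).
  rewrite /P /phi rmorphM -/phi => Pf Pg.
  have -> : f * g - phi f * phi g = (f - phi f) * g + phi f * (g - phi g).
    by rewrite mulrBl mulrBr addrA subrK.
  by apply: in_idealD; [apply: in_idealMr | apply: in_idealMl].
have PC c : P c%:MP by rewrite /P /phi mmapC subrr; apply: in_ideal0.
have PX i : P 'X_i by rewrite /P /phi mmapXU.
move=> f; rewrite -/(P f) (mpolyE f).
apply: (big_ind P); [by rewrite -mpolyC0; apply: (PC) | exact: (PD) |].
move=> m _; rewrite -mul_mpolyC; apply: (PM) => //.
rewrite mpolyXE_id.
apply: (big_ind P); [by rewrite -mpolyC1; apply: (PC) | exact: (PM) |].
move=> i _; elim: (m i) => [|k IHk]; first by rewrite expr0 -mpolyC1; apply: PC.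
by rewrite exprS; apply: PM.
Qed.

Lemma split_off_pair (T : finType) (e : {set T}) : (3 < #|e|)%N ->
  exists a b : {set T},
    [/\ e = a :|: b, [disjoint a & b], #|a| = 2 & (1 < #|b| < #|e|)%N].
Proof.
move=> e_gt3; have /card_gt1P [x [y [xe ye xy]]] : (1 < #|e|)%N by lia.
have ae : [set x; y] \subset e by rewrite subUset !sub1set xe ye.
have ca : #|[set x; y]| = 2 by rewrite cards2 xy.
exists [set x; y], (e :\: [set x; y]); split => //.
- by rewrite setDE setUIr setUCr setIT; apply/esym/setUidPr.
- by rewrite -setI_eq0 setDE setICA setICr setI0.
- by rewrite cardsD (setIidPr ae) ca; lia.
Qed.

Section ToricMap.
Variables (K : fieldType) (n : nat) (E : {set {set 'I_n}}).
Local Notation toric_map := (@toric_map K n E).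
Local Notation toric_ideal := (@toric_ideal K n E).

HB.instance Definition _ := GRing.RMorphism.copy toric_map
  (mmap (fun c : K => c%:MP) (fun i : 'I_#|E| => edge_monomial K (enum_val i))).

Lemma toric_mapX i : toric_map 'X_i = edge_monomial K (enum_val i).
Proof. exact: mmapXU. Qed.

Lemma toric_mapC c : toric_map c%:MP = c%:MP.
Proof. exact: mmapC. Qed.

Definition set_mnm (A : {set 'I_n}) : 'X_{1..n} := (\sum_(k in A) U_(k))%MM.

Lemma set_mnmE A k : set_mnm A k = (k \in A).
Proof.
rewrite /set_mnm mnm_sumE; have [kA | kNA] := boolP (k \in A).
  rewrite (bigD1 k) //= mnm1E eqxx big1 // => l /andP [_ lk].
  by rewrite mnm1E (negbTE lk).
by rewrite big1 // => l lA; rewrite mnm1E; case: eqP lA kNA => // ->->.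
Qed.

Lemma set_mnm_inj : injective set_mnm.
Proof.
move=> A B eAB; apply/setP => k; have := set_mnmE A k.
by rewrite eAB set_mnmE; case: (k \in A); case: (k \in B).
Qed.

Lemma set_mnm_eq0 A : (set_mnm A == 0%MM) = (A == set0).
Proof.
apply/eqP/eqP => [A0 | ->]; last by apply/mnmP => k; rewrite set_mnmE inE mnm0E.
by apply/setP => k; have := set_mnmE A k; rewrite A0 mnm0E inE; case: (k \in A).
Qed.

Lemma edge_monomialE A : edge_monomial K A = 'X_[set_mnm A].
Proof. by rewrite /edge_monomial (big_morph _ (@mpolyXD n K) (@mpolyX0 n K)). Qed.

Lemma edge_monomialU (A B : {set 'I_n}) : [disjoint A & B] ->
  edge_monomial K (A :|: B) = edge_monomial K A * edge_monomial K B.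
Proof.
by move=> AB; rewrite /edge_monomial -bigU //; apply: eq_bigl => z; rewrite !inE.
Qed.

Definition toric_mnm (m : 'X_{1..#|E|}) : 'X_{1..n} :=
  (\sum_(i < #|E|) set_mnm (enum_val i) *+ m i)%MM.

Lemma toric_mapXm m : toric_map 'X_[m] = 'X_[toric_mnm m].
Proof.
rewrite /toric_map mmapX /mmap1; under eq_bigr do rewrite edge_monomialE mpolyXn.
by rewrite (big_morph _ (@mpolyXD n K) (@mpolyX0 n K)).
Qed.

Lemma toric_mnm_inj_le1 : set0 \notin E ->
  {in [pred m | mdeg m <= 1]%N &, injective toric_mnm}.
Proof.
move=> E0 m1 m2; rewrite !inE.
have toric_mnmU j : toric_mnm U_(j)%MM = set_mnm (enum_val j).
  rewrite /toric_mnm (bigD1 j) //= mnm1E eqxx mulm1n big1 ?addm0 // => i ij.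
  by rewrite mnm1E eq_sym (negbTE ij) mulm0n.
have toric_mnm0 : toric_mnm 0%MM = 0%MM.
  by rewrite /toric_mnm big1 // => i _; rewrite mnm0E mulm0n.
have toric_mnmU_neq0 j : toric_mnm U_(j)%MM != 0%MM.
  by rewrite toric_mnmU set_mnm_eq0; apply: contraNneq E0 => <-; apply: enum_valP.
have le1_cases m : (mdeg m <= 1)%N -> m = 0%MM \/ exists j, m = U_(j)%MM.
  rewrite leq_eqVlt ltnS leqn0 mdeg_eq0 => /orP [/mdeg1P [j /eqP ->] | /eqP ->].
    by right; exists j.
  by left.
move=> /le1_cases [->|[j1 ->]] /le1_cases [->|[j2 ->]] //.
- by rewrite toric_mnm0 => /esym/eqP; rewrite (negbTE (toric_mnmU_neq0 _)).
- by rewrite toric_mnm0 => /eqP; rewrite (negbTE (toric_mnmU_neq0 _)).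
- by rewrite !toric_mnmU => /set_mnm_inj /enum_val_inj ->.
Qed.

Lemma toric_ideal_le1_eq0 (g : {mpoly K[#|E|]}) : set0 \notin E ->
  toric_ideal g -> (msize g <= 2)%N -> g = 0.
Proof.
move=> E0 /eqP Tg g_le2; apply/eqP; rewrite -msupp_eq0; apply/eqP.
case g_supp: (msupp g) => [|m0 s] //; exfalso.
have m0g : m0 \in msupp g by rewrite g_supp mem_head.
have le1 m : m \in msupp g -> (mdeg m <= 1)%N.
  by move=> /msize_mdeg_lt m_lt; rewrite -ltnS; apply: leq_trans g_le2.
have : (toric_map g)@_(toric_mnm m0) = g@_m0.
  rewrite {1}(mpolyE g) rmorph_sum /= raddf_sum (bigD1_seq m0) ?msupp_uniq //=.
  rewrite -mul_mpolyC rmorphM /= toric_mapC toric_mapXm mcoeffCM mcoeffX eqxx mulr1.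
  rewrite big_seq_cond big1 ?addr0 // => m /andP [mg mm0].
  rewrite -mul_mpolyC rmorphM /= toric_mapC toric_mapXm mcoeffCM mcoeffX.
  rewrite (inj_in_eq (toric_mnm_inj_le1 E0)) ?inE ?le1 //.
  by rewrite (negbTE mm0) mulr0.
by rewrite Tg mcoeff0 => /esym/eqP; apply/negP; rewrite -mcoeff_msupp.
Qed.

End ToricMap.

Lemma toric_binomial (K : fieldType) (n : nat) (E : {set {set 'I_n}})
    (a b c d : 'I_#|E|) :
  [disjoint enum_val a & enum_val b] -> [disjoint enum_val c & enum_val d] ->
  enum_val a :|: enum_val b = enum_val c :|: enum_val d -> c != a -> d != a ->
  @toric_ideal K n E ('X_a * 'X_b - 'X_c * 'X_d) /\
  ('X_a * 'X_b - 'X_c * 'X_d != 0 :> {mpoly K[#|E|]}).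
Proof.
move=> ab cd abcd ca da; split.
  rewrite /toric_ideal /= rmorphB !rmorphM /= !toric_mapX.
  by rewrite -!edge_monomialU // abcd subrr.
apply/eqP => /(congr1 (mcoeff (U_(a) + U_(b))%MM)).
rewrite mcoeffB -!mpolyXD !mcoeffX eqxx mcoeff0.
have /negbTE -> : (U_(c) + U_(d) != U_(a) + U_(b))%MM.
  apply/eqP => /mnmP /(_ a); rewrite !mnmDE !mnm1E eqxx.
  by rewrite (negbTE ca) (negbTE da).
by move/eqP; rewrite subr0 oner_eq0.
Qed.

Section ReductionToE2.
Variables (K : fieldType) (n : nat).
Local Notation N1 := #|E1 n|.
Local Notation N2 := #|E2 n|.
Local Notation toric1 := (@toric_map K n (E1 n)).
Local Notation toric2 := (@toric_map K n (E2 n)).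
Local Notation toric_ideal1 := (@toric_ideal K n (E1 n)).
Local Notation toric_ideal2 := (@toric_ideal K n (E2 n)).

Lemma E2_sub_E1 e : e \in E2 n -> e \in E1 n.
Proof. by rewrite !inE => /andP []. Qed.

Definition var_in_E1 (j : 'I_N2) : 'I_N1 :=
  enum_rank_in (E2_sub_E1 (enum_valP j)) (enum_val j).

Lemma var_in_E1_rank e (e2 : e \in E2 n) (e1 : e \in E1 n) :
  var_in_E1 (enum_rank_in e2 e) = enum_rank_in e1 e.
Proof. by apply: enum_val_inj; rewrite !enum_rankK_in // E2_sub_E1 // enum_valP. Qed.

Definition incl_E2_E1 (p : {mpoly K[N2]}) : {mpoly K[N1]} :=
  mmap (fun c : K => c%:MP) (fun j => 'X_(var_in_E1 j)) p.

HB.instance Definition _ := GRing.RMorphism.copy incl_E2_E1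
  (mmap (fun c : K => c%:MP) (fun j : 'I_N2 => 'X_(var_in_E1 j) : {mpoly K[N1]})).

Lemma incl_E2_E1X j : incl_E2_E1 'X_j = 'X_(var_in_E1 j).
Proof. exact: mmapXU. Qed.

Lemma msize_incl_E2_E1 p : (msize (incl_E2_E1 p) <= msize p)%N.
Proof. exact: msize_rename_le. Qed.

Lemma toric_incl_E2_E1 p : toric1 (incl_E2_E1 p) = toric2 p.
Proof.
rewrite rmorph_mmap; apply: eq_mmap => [c | j] /=; first exact: toric_mapC.
by rewrite toric_mapX /var_in_E1 enum_rankK_in // E2_sub_E1 // enum_valP.
Qed.

Definition splitting_binomial (g : {mpoly K[N1]}) := exists i j k : 'I_N1,
  [/\ enum_val i = enum_val j :|: enum_val k, [disjoint enum_val j & enum_val k]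
    & g = 'X_i - 'X_j * 'X_k].

Lemma splitting_binomial_toric g : splitting_binomial g -> toric_ideal1 g.
Proof.
move=> [i [j [k [ijk jk ->]]]].
by rewrite /toric_ideal /= rmorphB rmorphM /= !toric_mapX ijk edge_monomialU // subrr.
Qed.

Lemma msize_splitting_binomial g : splitting_binomial g -> (msize g <= 3)%N.
Proof.
move=> [i [j [k [_ _ ->]]]]; apply: leq_trans (mmeasureD_le _ _ _) _.
by rewrite mmeasureN geq_max msizeX mdeg1 -mpolyXD msizeX mdegD !mdeg1.
Qed.

Lemma lift_edge_variable (i : 'I_N1) : exists w : {mpoly K[N2]},
  toric2 w = edge_monomial K (enum_val i) /\
  in_ideal splitting_binomial ('X_i - incl_E2_E1 w).
Proof.
have [k] := ubnP #|enum_val i|; elim: k i => // k IH i e_lt.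
have e1 : enum_val i \in E1 n := enum_valP i.
have [e_le3 | e_gt3] := leqP #|enum_val i| 3.
  have e2 : enum_val i \in E2 n by move: e1; rewrite !inE e_le3 => ->.
  exists 'X_(enum_rank_in e2 (enum_val i)); split.
    by rewrite toric_mapX enum_rankK_in.
  by rewrite incl_E2_E1X (var_in_E1_rank e2 e1) enum_valK_in subrr; apply: in_ideal0.
have [a [b [eab ab a2 /andP [b_gt1 b_lt]]]] := split_off_pair e_gt3.
have a_in1 : a \in E1 n by rewrite inE a2.
have a_in2 : a \in E2 n by rewrite inE a2.
have b_in1 : b \in E1 n by rewrite inE.
set ja := enum_rank_in a_in1 a; set jb := enum_rank_in b_in1 b.
have [|wb [toric_wb wbP]] := IH jb; first by rewrite enum_rankK_in //; lia.
exists ('X_(enum_rank_in a_in2 a) * wb); split.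
  by rewrite rmorphM /= toric_mapX toric_wb !enum_rankK_in // -edge_monomialU -?eab.
rewrite rmorphM /= incl_E2_E1X (var_in_E1_rank a_in2 a_in1) -/ja.
have -> : 'X_i - 'X_ja * incl_E2_E1 wb =
    ('X_i - 'X_ja * 'X_jb) + 'X_ja * ('X_jb - incl_E2_E1 wb).
  by rewrite mulrBr addrA subrK.
apply: in_idealD; last exact: in_idealMl.
by apply: in_ideal_gen; exists i, ja, jb; rewrite !enum_rankK_in.
Qed.

Definition lift_to_E2 (i : 'I_N1) : {mpoly K[N2]} :=
  proj1_sig (constructive_indefinite_description _ (lift_edge_variable i)).

Lemma lift_to_E2P i :
  toric2 (lift_to_E2 i) = edge_monomial K (enum_val i) /\
  in_ideal splitting_binomial ('X_i - incl_E2_E1 (lift_to_E2 i)).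
Proof.
exact: proj2_sig (constructive_indefinite_description _ (lift_edge_variable i)).
Qed.

Definition proj_E1_E2 (p : {mpoly K[N1]}) : {mpoly K[N2]} :=
  mmap (fun c : K => c%:MP) lift_to_E2 p.

Lemma toric_proj_E1_E2 p : toric2 (proj_E1_E2 p) = toric1 p.
Proof.
rewrite rmorph_mmap; apply: eq_mmap => [c | i] /=; first exact: toric_mapC.
exact: (lift_to_E2P i).1.
Qed.

Lemma in_ideal_sub_incl_proj f :
  in_ideal splitting_binomial (f - incl_E2_E1 (proj_E1_E2 f)).
Proof.
rewrite rmorph_mmap.
rewrite (@eq_mmap _ _ _ _ (fun c : K => c%:MP) _ (incl_E2_E1 \o lift_to_E2)) //.
  by apply: in_ideal_diff_mmap => i; exact: (lift_to_E2P i).2.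
by move=> c /=; rewrite /incl_E2_E1 mmapC.
Qed.

Lemma generated_E1_of_E2 d : (2 <= d)%N ->
  generated_in_degree_le toric_ideal2 d -> generated_in_degree_le toric_ideal1 d.
Proof.
move=> d_ge2 /generated_in_degree_leE [S2 [S2_deg I2_S2]].
apply/generated_in_degree_leE.
exists (fun g => splitting_binomial g \/ exists2 g2, S2 g2 & g = incl_E2_E1 g2); split.
  move=> g [bin_g | [g2 /S2_deg [I2g2 g2_deg] ->]].
    split; first exact: splitting_binomial_toric.
    exact: leq_trans (msize_splitting_binomial bin_g) _.
  split; last exact: leq_trans (msize_incl_E2_E1 _) g2_deg.
  by rewrite /toric_ideal /= toric_incl_E2_E1.
move=> f I1f; rewrite -(subrK (incl_E2_E1 (proj_E1_E2 f)) f); apply: in_idealD.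
  by apply: sub_in_ideal (in_ideal_sub_incl_proj f) => g; left.
have I2f : toric_ideal2 (proj_E1_E2 f) by rewrite /toric_ideal /= toric_proj_E1_E2.
by apply: sub_in_ideal (in_ideal_rmorph incl_E2_E1 (I2_S2 _ I2f)) => g; right.
Qed.

End ReductionToE2.

Lemma E2_toric_ideal_neq0 (K : fieldType) (n : nat) : (3 < n)%N ->
  exists f, @toric_ideal K n (E2 n) f /\ f != 0.
Proof.
case: n => [|[|[|[|n]]]] // _; pose v k : 'I_n.+4 := inord k.
have v_eq i j : (i < 4)%N -> (j < 4)%N -> (v i == v j) = (i == j).
  by move=> i4 j4; rewrite -val_eqE /= !inordK //; lia.
pose A i j := [set v i; v j].
have AE i j : (i < 4)%N -> (j < 4)%N -> i != j -> A i j \in E2 n.+4.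
  by move=> i4 j4 ij; rewrite inE cards2 v_eq // ij.
have A_disj i j k l : (i < 4)%N -> (j < 4)%N -> (k < 4)%N -> (l < 4)%N ->
    i != k -> i != l -> j != k -> j != l -> [disjoint A i j & A k l].
  move=> i4 j4 k4 l4 ik il jk jl; rewrite disjoints_subset; apply/subsetP => z.
  by rewrite !inE => /orP [] /eqP ->; rewrite !v_eq // negb_or; apply/andP.
have e01 := AE 0 1 isT isT isT; have e23 := AE 2 3 isT isT isT.
have e02 := AE 0 2 isT isT isT; have e13 := AE 1 3 isT isT isT.
have rank_neq X Y (hX : X \in E2 n.+4) (hY : Y \in E2 n.+4) z :
    z \in X -> z \notin Y -> enum_rank_in hX X != enum_rank_in hY Y.
  move=> zX zY; apply: contraNneq zY => XY.
  by rewrite -(enum_rankK_in hY hY) -XY enum_rankK_in.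
exists ('X_(enum_rank_in e01 (A 0 1)) * 'X_(enum_rank_in e23 (A 2 3)) -
        'X_(enum_rank_in e02 (A 0 2)) * 'X_(enum_rank_in e13 (A 1 3))).
apply: toric_binomial; rewrite ?enum_rankK_in ?A_disj //.
- by apply/setP => z; rewrite !inE; do ! case: (_ == _).
- by apply: (rank_neq _ _ _ _ (v 2)); rewrite !inE !v_eq.
- by apply: (rank_neq _ _ _ _ (v 3)); rewrite !inE !v_eq.
Qed.

Lemma E1_eq_E2 n : (n <= 3)%N -> E1 n = E2 n.
Proof.
move=> n_le3; apply/setP => e; rewrite !inE.
have : (#|e| <= n)%N by rewrite -[n in (_ <= n)%N]card_ord max_card.
by case: (2 <= #|e|)%N => //= /leq_trans ->.
Qed.

Theorem lemma5p5 (K : fieldType) (n d : nat) :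
  generated_in_degree_le (@toric_ideal K n (E2 n)) d ->
  generated_in_degree_le (@toric_ideal K n (E1 n)) d.
Proof.
have [d_ge2 | d_lt2] := leqP 2 d; first exact: generated_E1_of_E2.
have [n_le3 | n_gt3] := leqP n 3; first by rewrite E1_eq_E2.
move=> /generated_in_degree_leE [S [S_deg IS]]; exfalso.
have S0 g : S g -> g = 0.
  move=> /S_deg [Ig g_deg]; apply: toric_ideal_le1_eq0 Ig (leq_trans g_deg _) => //.
  by rewrite inE cards0.
have [f [If /eqP]] := E2_toric_ideal_neq0 K n_gt3.
by apply; apply: in_ideal_eq0 S0 (IS _ If).
Qed.
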